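(* Let $\Bbbk$ be a commutative ring of global dimension zero, $C$ a $\Bbbk$-coalgebra and $M$ a right $C$-comodule finitely generated as a $\Bbbk$-module, with dual $M^*=\mathrm{Hom}_\Bbbk(M,\Bbbk)$. For every $C$-colinear $f\colon M\to M$, the colinear Hattori--Stallings trace $\mathrm{tr}^C(f)$ equals the image of $1\in\Bbbk$ under the composite \[\Bbbk\xrightarrow{\eta}M\square_CM^*\xrightarrow{f\square1}M\square_CM^*\cong\mathrm{coHH}_0(M^*\otimes M,C)\xrightarrow{\langle\epsilon\rangle}\mathrm{coHH}_0(C).\]
   Context: $M^*$ is a left $C$-comodule via $\alpha\mapsto(\alpha\otimes\mathrm{id}_C)\circ\rho\in\mathrm{Hom}_\Bbbk(M,C)\cong C\otimes M^*$. $\eta(1)=\sum_ie_i\otimes e_i^*$ for a basis $(e_i)$ and dual basis $(e_i^* )$ (corresponding to $\mathrm{id}_M$). The isomorphism $M\square_CM^*\cong\mathrm{coHH}_0(M^*\otimes M,C)$ is the swap $m\otimes\alpha\mapsto\alpha\otimes m$, where $\mathrm{coHH}_0(P,C)=\ker(\rho-\tilde t\lambda\colon P\to P\otimes C)$ for a $(C,C)$-bicomodule $P$. $\epsilon\colon M^*\otimes M\to C$ is the $C$-bicolinear map $\alpha\otimes m\mapsto\sum\alpha(m_{(0)})m_{(1)}$ and $\langle\epsilon\rangle$ its restriction. $\mathrm{tr}^C(f)=\sum_i\sum e_i^*(f(e_{i(0)}))e_{i(1)}\in\mathrm{coHH}_0(C)=\ker(\Delta-\tau\Delta)$. *)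

From HB Require Import structures.
From mathcomp Require Import all_boot all_order all_algebra.
Set Implicit Arguments. Unset Strict Implicit. Unset Printing Implicit Defensive.
Import GRing.Theory.
Local Open Scope ring_scope.

Section Defs.
Variable k : comPzRingType.

Definition bilinear_map (U V W : lmodType k) (f : U -> V -> W) : Prop :=
  (forall u, linear (f u)) /\ (forall v, linear (fun u => f u v)).

Definition projective_mod (P : lmodType k) : Prop :=
  forall (A B : lmodType k) (p : A -> B) (g : P -> B),
    linear p -> (forall b, exists a, p a = b) -> linear g ->
    exists h : P -> A, linear h /\ forall x, p (h x) = g x.

Definition gldim0 : Prop := forall P : lmodType k, projective_mod P.

Definition fingen (M : lmodType k) : Prop :=
  exists (n : nat) (g : 'I_n -> M),
    forall m, exists a : 'I_n -> k, m = \sum_(i < n) a i *: g i.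

(** A tensor product U (x)_k V, given by its universal property:
    a k-bilinear map tmul such that every k-bilinear map factors
    uniquely through a k-linear map (tlift). *)
Record tensor (U V : lmodType k) := Tensor {
  tT :> lmodType k;
  tmul : U -> V -> tT;
  tlift : forall W : lmodType k, (U -> V -> W) -> tT -> W;
  tmul_bilin : bilinear_map tmul;
  tlift_linear : forall (W : lmodType k) (f : U -> V -> W),
      bilinear_map f -> linear (tlift f);
  tlift_tmul : forall (W : lmodType k) (f : U -> V -> W),
      bilinear_map f -> forall u v, tlift f (tmul u v) = f u v;
  tensor_ext : forall (W : lmodType k) (g h : tT -> W), linear g -> linear h ->
      (forall u v, g (tmul u v) = h (tmul u v)) -> forall x, g x = h x
}.

(** The dual module M^* = Hom_k(M, k), given up to isomorphism by an
    evaluation pairing identifying it with the k-module of k-linear forms. *)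
Record dual (M : lmodType k) := Dual {
  dT :> lmodType k;
  dev : dT -> M -> k^o;
  dev_bilin : bilinear_map dev;
  dev_inj : forall a b : dT, (forall m, dev a m = dev b m) -> a = b;
  dev_surj : forall g : M -> k^o, linear g -> exists a : dT, forall m, dev a m = g m
}.

Definition coalgebra (C : lmodType k) (CC : tensor C C)
    (Delta : C -> CC) (eps : C -> k^o) : Prop :=
  [/\ linear Delta, linear eps,
      (* coassociativity, tested against all trilinear maps C x C x C -> W *)
      (forall (W : lmodType k) (t : C -> C -> C -> W),
         (forall a b, linear (t a b)) -> (forall a c, linear (fun b => t a b c)) ->
         (forall b c, linear (fun a => t a b c)) ->
         forall x,
         tlift (fun y c => tlift (fun a b => t a b c) (Delta y)) (Delta x)
         = tlift (fun a y => tlift (fun b c => t a b c) (Delta y)) (Delta x)),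
      (forall x, tlift (fun a b => eps a *: b) (Delta x) = x) &
      (forall x, tlift (fun a b => eps b *: a) (Delta x) = x)].

Definition rcomodule (C : lmodType k) (CC : tensor C C) (Delta : C -> CC)
    (eps : C -> k^o) (M : lmodType k) (MC : tensor M C) (rho : M -> MC) : Prop :=
  [/\ linear rho,
      (forall (W : lmodType k) (t : M -> C -> C -> W),
         (forall a b, linear (t a b)) -> (forall a c, linear (fun b => t a b c)) ->
         (forall b c, linear (fun a => t a b c)) ->
         forall x,
         tlift (fun y c => tlift (fun a b => t a b c) (rho y)) (rho x)
         = tlift (fun a y => tlift (fun b c => t a b c) (Delta y)) (rho x)) &
      (forall x, tlift (fun m c => eps c *: m) (rho x) = x)].

Definition colinear (C M : lmodType k) (MC : tensor M C) (rho : M -> MC)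
    (f : M -> M) : Prop :=
  linear f /\ forall m, rho (f m) = tlift (fun m' c => tmul MC (f m') c) (rho m).

Definition dual_basis (M : lmodType k) (Ms : dual M) (n : nat)
    (e : 'I_n -> M) (es : 'I_n -> Ms) : Prop :=
  forall x, x = \sum_(i < n) (dev (es i) x : k) *: e i.

Definition trC (C M : lmodType k) (MC : tensor M C) (rho : M -> MC)
    (Ms : dual M) (n : nat) (e : 'I_n -> M) (es : 'I_n -> Ms) (f : M -> M) : C :=
  \sum_(i < n) tlift (fun m c => (dev (es i) (f m) : k) *: c) (rho (e i)).

Definition eta1 (M : lmodType k) (Ms : dual M) (MMs : tensor M Ms)
    (n : nat) (e : 'I_n -> M) (es : 'I_n -> Ms) : MMs :=
  \sum_(i < n) tmul MMs (e i) (es i).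

(** f (x) 1 : M (x) M^* -> M (x) M^* (restricting to f box 1 on M box_C M^* ). *)
Definition tens_f1 (M : lmodType k) (Ms : dual M) (MMs : tensor M Ms)
    (f : M -> M) : MMs -> MMs :=
  tlift (fun m a => tmul MMs (f m) a).

Definition tswap (M : lmodType k) (Ms : dual M) (MMs : tensor M Ms)
    (MsM : tensor Ms M) : MMs -> MsM :=
  tlift (fun m a => tmul MsM a m).

Definition ev_eps (C M : lmodType k) (MC : tensor M C) (rho : M -> MC)
    (Ms : dual M) (MsM : tensor Ms M) : MsM -> C :=
  tlift (fun a m => tlift (fun m' c => (dev a m' : k) *: c) (rho m)).

End Defs.

(** The composite sends [e_i ⊗ e_i^*] to [sum e_i^*((f e_i)_(0)) (f e_i)_(1)], and
    colinearity of [f] rewrites this as [sum e_i^*(f (e_i(0))) e_i(1)], the [i]-th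
    summand of [tr^C(f)]. So the identity holds summand by summand: of the comodule
    structure only the linearity of [rho] is used, while the counit, coassociativity,
    global dimension zero, finite generation and the dual-basis property serve only
    to make both sides well-defined elements of [coHH_0(C)]. *)

From HB Require Import structures.
From mathcomp Require Import all_boot all_order all_algebra.
Set Implicit Arguments. Unset Strict Implicit. Unset Printing Implicit Defensive.
Import GRing.Theory.
Local Open Scope ring_scope.

Section LinearMaps.
Variables (k : comPzRingType) (U V : lmodType k) (f : U -> V).
Hypothesis lf : linear f.

Lemma linear_addE x y : f (x + y) = f x + f y.
Proof. exact: (GRing.semilinear_linear lf).2. Qed.

Lemma linear_scaleE a x : f (a *: x) = a *: f x.
Proof. by move: a x; apply: scalable_linear. Qed.

Lemma linear_sumE (I : Type) (r : seq I) (F : I -> U) :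
  f (\sum_(i <- r) F i) = \sum_(i <- r) f (F i).
Proof.
apply: (big_morph f linear_addE).
by rewrite -[0 in LHS](scale0r 0) linear_scaleE scale0r.
Qed.

End LinearMaps.

Section TensorLift.
Variable k : comPzRingType.
Implicit Types U V W X : lmodType k.

Lemma bilinear_flip U V W (g : U -> V -> W) :
  bilinear_map g -> bilinear_map (fun v u => g u v).
Proof. by case=> g1 g2; split. Qed.

Lemma bilinear_compl U U' V W (g : U -> V -> W) (h : U' -> U) :
  bilinear_map g -> linear h -> bilinear_map (fun u v => g (h u) v).
Proof.
case=> g1 g2 lh; split=> [u|v]; first exact: g1.
by move=> a x y /=; rewrite lh g2.
Qed.

Lemma bilinear_scale_form U V (phi : U -> k^o) :
  linear phi -> bilinear_map (fun (u : U) (v : V) => phi u *: v).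
Proof.
move=> lphi; split=> [u|v] a x y /=.
  by rewrite scalerDr !scalerA mulrC.
by rewrite lphi scalerDl scalerA.
Qed.

Lemma tlift_comp U V U' V' W (T : tensor U V) (T' : tensor U' V')
    (h : U -> V -> T') (phi : U' -> V' -> W) (psi : U -> V -> W) :
  bilinear_map h -> bilinear_map phi -> bilinear_map psi ->
  (forall u v, tlift phi (h u v) = psi u v) ->
  forall y : T, tlift phi (tlift h y) = tlift psi y.
Proof.
move=> bh bphi bpsi phi_h.
have lphi := tlift_linear (t := T') bphi; have lh := tlift_linear (t := T) bh.
apply: tensor_ext; last by move=> u v; rewrite !tlift_tmul.
- by move=> a u v; rewrite lh lphi.
- exact: tlift_linear.
Qed.

Lemma linear_tlift_family U V W X (T : tensor U V) (F : X -> U -> V -> W) :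
  (forall x, bilinear_map (F x)) -> (forall u v, linear (fun x => F x u v)) ->
  forall y : T, linear (fun x => tlift (F x) y).
Proof.
move=> bF lF y a x1 x2.
have l1 := tlift_linear (t := T) (bF x1); have l2 := tlift_linear (t := T) (bF x2).
apply: (tensor_ext (g := tlift (F (a *: x1 + x2)))
  (h := fun y => a *: tlift (F x1) y + tlift (F x2) y)).
- exact: tlift_linear.
- move=> c y1 y2.
  by rewrite l1 l2 !scalerDr !scalerA mulrC addrACA.
- by move=> u v; rewrite !tlift_tmul // lF.
Qed.

End TensorLift.

Section TraceComposite.
Variables (k : comPzRingType) (C M : lmodType k) (MC : tensor M C) (rho : M -> MC).
Variables (Ms : dual M) (MMs : tensor M Ms) (MsM : tensor Ms M).
Hypothesis lrho : linear rho.

Lemma bilinear_ev_eps_kernel :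
  bilinear_map (fun (a : Ms) (m : M) =>
    tlift (fun m' (c : C) => (dev a m' : k) *: c) (rho m)).
Proof.
have [dev1 dev2] := dev_bilin Ms.
split=> [a|m].
  have la := tlift_linear (t := MC) (bilinear_scale_form C (dev1 a)).
  by move=> s x y /=; rewrite lrho la.
apply: linear_tlift_family => [a|m' c s x y /=].
  exact: bilinear_scale_form.
by rewrite dev2 scalerDl scalerA.
Qed.

Lemma ev_eps_tmul a m :
  ev_eps rho (tmul MsM a m) = tlift (fun m' c => (dev a m' : k) *: c) (rho m).
Proof. by rewrite /ev_eps tlift_tmul //; apply: bilinear_ev_eps_kernel. Qed.

Lemma ev_eps_tmul_colinear (f : M -> M) a m : colinear rho f ->
  ev_eps rho (tmul MsM a (f m))
  = tlift (fun m' c => (dev a (f m') : k) *: c) (rho m).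
Proof.
case=> lf rho_f; rewrite ev_eps_tmul rho_f.
have [dev1 _] := dev_bilin Ms.
apply: tlift_comp => [||| u v]; last by rewrite tlift_tmul //; apply: bilinear_scale_form.
- exact: bilinear_compl (tmul_bilin MC) lf.
- exact: bilinear_scale_form.
- by apply: bilinear_scale_form => s x y; rewrite lf dev1.
Qed.

Lemma tswap_tens_f1_eta1 (f : M -> M) n (e : 'I_n -> M) (es : 'I_n -> Ms) :
  linear f ->
  tswap MsM (tens_f1 f (eta1 MMs e es)) = \sum_(i < n) tmul MsM (es i) (f (e i)).
Proof.
move=> lf.
have bf1 : bilinear_map (fun m (a : Ms) => tmul MMs (f m) a).
  exact: bilinear_compl (tmul_bilin MMs) lf.
have bsw : bilinear_map (fun m (a : Ms) => tmul MsM a m).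
  exact: bilinear_flip (tmul_bilin MsM).
rewrite /tswap /tens_f1 /eta1 (linear_sumE (tlift_linear (t := MMs) bf1)).
rewrite (linear_sumE (tlift_linear (t := MMs) bsw)).
by apply: eq_bigr => i _; rewrite !tlift_tmul.
Qed.

End TraceComposite.

Theorem proposition6p5
  (k : comPzRingType) (hk : gldim0 k)
  (C : lmodType k) (CC : tensor C C) (Delta : C -> CC) (epsC : C -> k^o)
  (hC : coalgebra Delta epsC)
  (M : lmodType k) (MC : tensor M C) (rho : M -> MC)
  (hM : rcomodule Delta epsC rho) (hfg : fingen M)
  (Ms : dual M) (MMs : tensor M Ms) (MsM : tensor Ms M)
  (n : nat) (e : 'I_n -> M) (es : 'I_n -> Ms) (hdb : dual_basis e es)
  (f : M -> M) (hf : colinear rho f) :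
  trC rho e es f = ev_eps rho (tswap MsM (tens_f1 f (eta1 MMs e es))).
Proof.
have [lrho _ _] := hM.
rewrite tswap_tens_f1_eta1; last by case: hf.
have lev : linear (ev_eps rho (MsM := MsM)).
  exact: (tlift_linear (t := MsM) (bilinear_ev_eps_kernel Ms lrho)).
rewrite (linear_sumE lev) /trC.
by apply: eq_bigr => i _; rewrite ev_eps_tmul_colinear.
Qed.
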